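(* Let $(X,T)$ be a Cantor minimal system and let $E(X,T)=\{\theta\in\mathbb R:\exp(2\pi i\theta)\text{ is a continuous eigenvalue of }T\}$. For $\theta\in[0,1)\cap E(X,T)$ let $U_\theta$ be a clopen subset of $X$ such that $1_{U_\theta}-\theta\mathbf 1$ is a real coboundary (such a set exists, with $U_0=\emptyset$). For $\theta\in E(X,T)$ define $\Theta(\theta)=\lfloor\theta\rfloor[1_X]+[1_{U_{\{\theta\}}}]\in K^0(X,T)$, where $\{\theta\}=\theta-\lfloor\theta\rfloor$. Then $\Theta$ is well defined (independent of the choice of the sets $U_{\{\theta\}}$) and $\Theta:E(X,T)\to K^0(X,T)$ is an injective group homomorphism.
   Context: A Cantor minimal system is a homeomorphism $T$ of a Cantor set $X$ with all orbits dense. A continuous eigenvalue is $\lambda\in\mathbb C$ with $f\circ T=\lambda f$ for some continuous $f:X\to\mathbb S^1$. A real coboundary is a function of the form $F-F\circ T$ with $F\in C(X,\mathbb R)$. $K^0(X,T)=C(X,\mathbb Z)/\{f-f\circ T:f\in C(X,\mathbb Z)\}$ and $[f]$ denotes the class of $f$. *)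

From HB Require Import structures.
From mathcomp Require Import all_boot all_order all_algebra.
From mathcomp Require Import all_classical all_reals all_analysis.
Set Implicit Arguments. Unset Strict Implicit. Unset Printing Implicit Defensive.
Import Order.TTheory GRing.Theory Num.Theory.
Import numFieldTopology.Exports numFieldNormedType.Exports.
Local Open Scope classical_set_scope.
Local Open Scope ring_scope.

Definition homeomorphism (X : topologicalType) (T : X -> X) : Prop :=
  exists Tinv : X -> X,
    [/\ cancel T Tinv, cancel Tinv T, continuous T & continuous Tinv].

Definition orbit (X : Type) (T : X -> X) (x : X) : set X :=
  [set y | exists n : nat, y = iter n T x \/ x = iter n T y].

Definition cantor_minimal (R : realType) (X : pseudoPMetricType R)
  (T : X -> X) : Prop :=
  [/\ cantor_like X, homeomorphism T &
      forall x : X, closure (orbit T x) = [set: X]].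

(* exp(2 pi i theta) is a continuous eigenvalue of T: there is a continuous
   f = fr + i fi : X -> S^1 with f (T x) = exp(2 pi i theta) f x
   (complex multiplication written out in real and imaginary parts). *)
Definition E_set (R : realType) (X : pseudoPMetricType R) (T : X -> X)
  : set R :=
  [set theta : R | exists fr fi : X -> R,
     [/\ continuous (fr : X -> R), continuous (fi : X -> R),
         (forall x, fr x ^+ 2 + fi x ^+ 2 = 1) &
         (forall x,
            fr (T x) = cos (2 * pi * theta) * fr x - sin (2 * pi * theta) * fi x
         /\ fi (T x) = sin (2 * pi * theta) * fr x + cos (2 * pi * theta) * fi x)]].

Definition real_coboundary (R : realType) (X : pseudoPMetricType R)
  (T : X -> X) (g : X -> R) : Prop :=
  exists F : X -> R, continuous (F : X -> R) /\ forall x, g x = F x - F (T x).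

(* h in C(X,Z) : continuous for the (discrete) topology of Z, seen inside R *)
Definition cont_int (R : realType) (X : pseudoPMetricType R) (h : X -> int)
  : Prop := continuous ((fun x => (h x)%:~R) : X -> R).

(* [f] = [g] in K^0(X,T) = C(X,Z) / {h - h o T : h in C(X,Z)} *)
Definition K0_eq (R : realType) (X : pseudoPMetricType R) (T : X -> X)
  (f g : X -> int) : Prop :=
  exists h : X -> int, cont_int h /\ forall x, f x - g x = h x - h (T x).

Definition admissible (R : realType) (X : pseudoPMetricType R) (T : X -> X)
  (theta : R) (U : set X) : Prop :=
  clopen U /\ real_coboundary T (fun x => (\1_U x : R) - theta).

Definition fracpart (R : realType) (theta : R) : R :=
  theta - (Num.floor theta)%:~R.

(* representative in C(X,Z) of Theta(theta) = floor(theta)[1_X] + [1_U],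
   U an admissible choice of U_{fracpart theta} *)
Definition Theta_rep (R : realType) (X : pseudoPMetricType R)
  (theta : R) (U : set X) : X -> int :=
  fun x => Num.floor theta + (\1_U x : int).

(* Let f : X -> S^1 be an eigenfunction for exp (2 pi i theta), 0 < theta < 1.
   Since X is compact and zero-dimensional, f = exp (2 pi i phi) for a continuous
   phi with values within eps of [0, 1]: local lifts through asin exist on clopen
   neighbourhoods, and finitely many of them glue.  Then theta + phi - phi o T is
   continuous, integer-valued and in (-1, 2), hence the indicator of a clopen set
   U_theta with 1_U - theta = phi - phi o T.
   As real functions, Theta_rep theta U = theta + (1_U - {theta}), so for
   well-definedness, additivity and injectivity the difference of the
   representatives involved is a real coboundary plus a constant.  By minimality, an integer-valued real coboundary
   F - F o T is an integer coboundary (exp (2 pi i F) is T-invariant, hence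
   constant, so h := F - F x0 is continuous and integer-valued, and
   F - F o T = h - h o T), and on a compact space a constant real coboundary c
   vanishes, since F o T^n = F - n c stays bounded. *)

From Pilot Require Import Defs.
From HB Require Import structures.
From mathcomp Require Import all_boot all_order all_algebra.
From mathcomp Require Import all_classical all_reals all_analysis.
From mathcomp Require Import ring lra zify.
Import Order.TTheory GRing.Theory Num.Theory.
Import numFieldTopology.Exports numFieldNormedType.Exports.
Set Implicit Arguments.
Unset Strict Implicit.
Unset Printing Implicit Defensive.
Local Open Scope classical_set_scope.
Local Open Scope ring_scope.

Section Trigonometry.
Variable R : realType.
Implicit Types (a b s t : R) (n : int).

Lemma cos_sin_2pi_intr n :
  cos (2 * pi * n%:~R) = 1 :> R /\ sin (2 * pi * n%:~R) = 0 :> R.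
Proof.
have cs_nat (m : nat) : cos (2 * pi * m%:R) = 1 :> R /\ sin (2 * pi * m%:R) = 0 :> R.
  have := periodicn (@cosD2pi R) m 0; have := periodicn (@sinD2pi R) m 0.
  by rewrite !add0r cos0 sin0 mulr_natr mulr_natl => -> ->.
case: n => m; first exact: cs_nat.
by rewrite NegzE mulrNz mulrN cosN sinN (cs_nat m.+1).1 (cs_nat m.+1).2 oppr0.
Qed.

Lemma cos2piD_intr t n : cos (2 * pi * (t + n%:~R)) = cos (2 * pi * t).
Proof.
by rewrite mulrDr cosD (cos_sin_2pi_intr n).1 (cos_sin_2pi_intr n).2 mulr1 mulr0 subr0.
Qed.

Lemma sin2piD_intr t n : sin (2 * pi * (t + n%:~R)) = sin (2 * pi * t).
Proof.
by rewrite mulrDr sinD (cos_sin_2pi_intr n).1 (cos_sin_2pi_intr n).2 mulr1 mulr0 addr0.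
Qed.

Lemma fracpart_itv t : 0 <= fracpart t < 1.
Proof.
by rewrite subr_ge0 floor_le /= ltrBlDr -[1]/(1%:~R) -intrD addrC floorD1_gt.
Qed.

Lemma cos2pi_eq1 s : 0 <= s < 1 -> cos (2 * pi * s) = 1 -> s = 0.
Proof.
move=> /andP[s0 s1] cs1.
(* [cos (2 x) = 1 - 2 sin x ^ 2], and [sin] has no zero in [(0, pi)]. *)
have sin_pis : sin (pi * s) = 0.
  move: cs1; rewrite -mulrA mulr_natl cos_mulr2n cos2sin2.
  by move=> /eqP; rewrite -subr_eq0 => /eqP h; apply/eqP; rewrite -sqrf_eq0; lra.
apply/eqP; rewrite eq_le s0 andbT; apply: contraT; rewrite -ltNge => sp.
have : 0 < sin (pi * s) by apply: sin_gt0_pi; rewrite mulr_gt0 ?pi_gt0 //= gtr_pMr ?pi_gt0.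
by rewrite sin_pis ltxx.
Qed.

Lemma cos_sin_2pi_eq a b : cos (2 * pi * a) = cos (2 * pi * b) ->
  sin (2 * pi * a) = sin (2 * pi * b) -> exists n : int, a = b + n%:~R.
Proof.
move=> ca sa; exists (Num.floor (a - b)).
suff : fracpart (a - b) = 0 by rewrite /fracpart; lra.
apply: cos2pi_eq1; first exact: fracpart_itv.
rewrite /fracpart -intrN cos2piD_intr mulrBr cosB ca sa.
by rewrite -!expr2 cos2Dsin2.
Qed.

Lemma unit_circle_angle a b : a ^+ 2 + b ^+ 2 = 1 ->
  exists t, [/\ 0 <= t < 1, cos (2 * pi * t) = a & sin (2 * pi * t) = b].
Proof.
move=> ab1.
have [c [ca sb]] : exists c, cos c = a /\ sin c = b.
  have ha : -1 <= a <= 1 by apply/andP; split; nra.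
  have cac : cos (acos a) = a by apply: acosK; rewrite in_itv.
  have sac : sin (acos a) = `|b|.
    by rewrite sin_acos // (_ : 1 - a ^+ 2 = b ^+ 2) ?sqrtr_sqr //; lra.
  have [b0|b0] := lerP 0 b; first by exists (acos a); rewrite cac sac ger0_norm.
  by exists (- acos a); rewrite cosN sinN cac sac ltr0_norm // opprK.
have p2 : 2 * pi != 0 :> R by rewrite mulf_neq0 // gt_eqF ?pi_gt0.
exists (fracpart (c / (2 * pi))); split; first exact: fracpart_itv.
  by rewrite /fracpart -intrN cos2piD_intr mulrC divfK.
by rewrite /fracpart -intrN sin2piD_intr mulrC divfK.
Qed.

Lemma asin0 : asin (0 : R) = 0.
Proof.
by rewrite -[in LHS]sin0 sinK // in_itv /= oppr_le0 divr_ge0 ?pi_ge0.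
Qed.

Lemma cos_sin_asin a b : a ^+ 2 + b ^+ 2 = 1 -> 0 < a ->
  cos (asin b) = a /\ sin (asin b) = b.
Proof.
move=> ab1 a0; have hb : -1 <= b <= 1 by apply/andP; split; nra.
split; last by rewrite asinK // in_itv.
by rewrite cos_asin // (_ : 1 - b ^+ 2 = a ^+ 2) ?sqrtr_sqr ?gtr0_norm //; lra.
Qed.

Lemma rotate_asin t a b : a ^+ 2 + b ^+ 2 = 1 ->
  0 < a * cos (2 * pi * t) + b * sin (2 * pi * t) ->
  let w := asin (b * cos (2 * pi * t) - a * sin (2 * pi * t)) in
  cos (2 * pi * t + w) = a /\ sin (2 * pi * t + w) = b.
Proof.
move=> ab1 + w; rewrite /w cosD sinD.
have := cos2Dsin2 (2 * pi * t).
move: (cos _) (sin _) => c s cs1 pos.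
have [-> ->] : cos (asin (b * c - a * s)) = a * c + b * s /\
               sin (asin (b * c - a * s)) = b * c - a * s.
  apply: cos_sin_asin => //.
  have -> : (a * c + b * s) ^+ 2 + (b * c - a * s) ^+ 2
          = (a ^+ 2 + b ^+ 2) * (c ^+ 2 + s ^+ 2) by ring.
  by rewrite ab1 cs1 mulr1.
have -> : c * (a * c + b * s) - s * (b * c - a * s) = a * (c ^+ 2 + s ^+ 2) by ring.
have -> : s * (a * c + b * s) + c * (b * c - a * s) = b * (c ^+ 2 + s ^+ 2) by ring.
by rewrite cs1 !mulr1.
Qed.

End Trigonometry.

Section ContinuousSelection.
Variables (X Y : ptopologicalType) (P : X -> Y -> Prop).

Definition continuous_selection (S : set X) :=
  exists g : X -> Y, forall x, S x -> {for x, continuous g} /\ P x (g x).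

Lemma continuous_selection_sub (S S' : set X) :
  S' `<=` S -> continuous_selection S -> continuous_selection S'.
Proof. by move=> S'S [g hg]; exists g => x /S'S /hg. Qed.

Lemma continuous_selection0 : continuous_selection set0.
Proof. by exists (fun=> point) => x []. Qed.

Lemma continuous_near_eq (f g : X -> Y) (x : X) :
  {near x, f =1 g} -> {for x, continuous g} -> {for x, continuous f}.
Proof.
move=> fg gc; rewrite /prop_for /continuous_at (nbhs_singleton fg).
apply: cvg_trans gc; apply: near_eq_cvg.
by apply: filterS fg => y /= ->.
Qed.

Lemma continuous_selectionU (A B : set X) : clopen A ->
  continuous_selection A -> continuous_selection B ->
  continuous_selection (A `|` B).
Proof.
move=> [oA cA] [gA hA] [gB hB].
exists (fun x => if pselect (A x) then gA x else gB x) => x ABx.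
case: (pselect (A x)) => [Ax|nAx].
  have [gAc PgA] := hA x Ax; split => //; apply: (@continuous_near_eq _ gA _ _ gAc).
  by apply: filterS (open_nbhs_nbhs (conj oA Ax)) => y Ay /=; case: pselect.
have Bx : B x by case: ABx.
have [gBc PgB] := hB x Bx; split => //; apply: (@continuous_near_eq _ gB _ _ gBc).
have oC : open (~` A) by rewrite openC.
by apply: filterS (open_nbhs_nbhs (conj oC nAx)) => y nAy /=; case: pselect.
Qed.

Lemma continuous_selection_bigcup (I : eqType) (D : I -> set X) (s : seq I) :
  (forall i, clopen (D i) /\ continuous_selection (D i)) ->
  continuous_selection (\bigcup_(i in [set` s]) D i).
Proof.
move=> hD; elim: s => [|a s IH].
  by apply: (continuous_selection_sub _ continuous_selection0) => x [].
apply: (continuous_selection_sub _ (continuous_selectionU (hD a).1 (hD a).2 IH)).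
by move=> x [i]; rewrite /= inE => /orP[/eqP <-|si] Dx; [left | right; exists i].
Qed.

Lemma compact_continuous_selection : compact [set: X] ->
  (forall x, exists D, [/\ D x, clopen D & continuous_selection D]) ->
  continuous_selection [set: X].
Proof.
move=> + loc; rewrite compact_cover => cX; have [D hD] := choice loc.
have [s _ cov] : finite_subset_cover [set: X] D [set: X].
  apply: cX => [x _|x _]; first by have [_ []] := hD x.
  by exists x => //; have [] := hD x.
apply: (continuous_selection_sub _
  (@continuous_selection_bigcup _ D (finmap.enum_fset s) _)).
  by move=> x /cov.
by move=> x; have [_ ? ?] := hD x.
Qed.

End ContinuousSelection.

Section TurnAngle.
Variables (R : realType) (X : ptopologicalType) (fr fi : X -> R) (eps : R).
Hypotheses (fr_cont : continuous fr) (fi_cont : continuous fi)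
  (f_unit : forall x, fr x ^+ 2 + fi x ^+ 2 = 1) (eps_gt0 : 0 < eps).

(* [v] is an argument of [f x], measured in turns; the slack [eps] around [[0, 1]]
   keeps [theta + phi x - phi (T x)] inside [(-1, 2)] in [admissible_exists]. *)
Definition turn_angle (x : X) (v : R) : Prop :=
  [/\ cos (2 * pi * v) = fr x, sin (2 * pi * v) = fi x & -eps < v < 1 + eps].

Lemma turn_angle_local (x0 : X) :
  exists2 V, nbhs x0 V & continuous_selection turn_angle V.
Proof.
have [t0 [/andP[t0_ge0 t0_lt1] c0 s0]] := unit_circle_angle (f_unit x0).
pose wr y := fr y * cos (2 * pi * t0) + fi y * sin (2 * pi * t0).
pose wi y := fi y * cos (2 * pi * t0) - fr y * sin (2 * pi * t0).
pose g y := t0 + asin (wi y) / (2 * pi).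
have pi2_gt0 : 0 < 2 * pi :> R by rewrite mulr_gt0 ?pi_gt0.
have wr_cont : continuous wr.
  move=> y; apply: cvgD; apply: cvgM;
  by [exact: fr_cont | exact: fi_cont | exact: cvg_cst].
have wi_cont : continuous wi.
  move=> y; apply: cvgB; apply: cvgM;
  by [exact: fr_cont | exact: fi_cont | exact: cvg_cst].
have g_cont y : 0 < wr y -> {for y, continuous g}.
  move=> wr_gt0; have w1 : wr y ^+ 2 + wi y ^+ 2 = 1.
    rewrite -(f_unit y) -[RHS]mulr1 -(cos2Dsin2 (2 * pi * t0)) /wr /wi; ring.
  have wi_itv : -1 < wi y < 1 by apply/andP; split; nra.
  apply: cvgD; first exact: cvg_cst.
  apply: cvgM; last exact: cvg_cst.
  exact: continuous_comp (wi_cont y) (continuous_asin wi_itv).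
have g_angle y : 0 < wr y -> cos (2 * pi * g y) = fr y /\ sin (2 * pi * g y) = fi y.
  by rewrite /g mulrDr mulrCA divff ?gt_eqF // mulr1; exact: rotate_asin.
have wr_x0 : wr x0 = 1 by rewrite /wr c0 s0 -!expr2.
have g_x0 : g x0 = t0 by rewrite /g /wi c0 s0 (mulrC (fi x0)) subrr asin0 mul0r addr0.
exists [set y | 0 < wr y /\ `|t0 - g y| < eps].
  apply: filterI.
    have : nbhs (wr x0) [set z : R | 0 < z].
      by apply: open_nbhs_nbhs; split; [exact: open_gt | rewrite /= wr_x0].
    exact: wr_cont.
  by rewrite -{1}g_x0; apply: cvgr_dist_lt => //; apply: g_cont; rewrite wr_x0.
exists g => y [wr_gt0 g_near]; have [cg sg] := g_angle y wr_gt0.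
split; [exact: g_cont | split => //].
by move: g_near; rewrite ltr_norml => /andP[? ?]; apply/andP; split; lra.
Qed.

Lemma turn_angle_lift : hausdorff_space X -> zero_dimensional X ->
  compact [set: X] -> exists phi, continuous phi /\ forall x, turn_angle x (phi x).
Proof.
move=> hX zX cX; have [phi hphi] : continuous_selection turn_angle [set: X].
  apply: compact_continuous_selection => // x.
  have [V xV selV] := turn_angle_local x.
  have [D [Dx clD] DV] := zero_dimensional_cvg hX zX cX xV.
  by exists D; split => //; exact: continuous_selection_sub selV.
by exists phi; split => x; have [] := hphi x I.
Qed.

End TurnAngle.

Section Coboundaries.
Variables (R : realType) (X : pseudoPMetricType R) (T : X -> X).

Lemma eq_real_coboundary (g g' : X -> R) :
  real_coboundary T g -> g =1 g' -> real_coboundary T g'.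
Proof. by move=> + /funext <-. Qed.

Lemma real_coboundaryB (g1 g2 : X -> R) :
  real_coboundary T g1 -> real_coboundary T g2 ->
  real_coboundary T (fun x => g1 x - g2 x).
Proof.
move=> [F1 [F1c hF1]] [F2 [F2c hF2]]; exists (fun x => F1 x - F2 x); split.
  by move=> x; apply: cvgB; [exact: F1c | exact: F2c].
by move=> x; rewrite hF1 hF2; ring.
Qed.

Lemma real_coboundary_cst (c : R) :
  compact [set: X] -> real_coboundary T (fun=> c) -> c = 0.
Proof.
move=> cX [G [Gc hG]].
have G_iter n x : G (iter n T x) = G x - n%:R * c.
  elim: n => [|n IH]; first by rewrite mul0r subr0.
  by rewrite iterS; move: (hG (iter n T x)); rewrite IH mulrSr; lra.
have cG : compact (G @` [set: X]).
  by apply: continuous_compact cX; exact: continuous_subspaceT.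
have [M [_ GM]] := compact_bounded cG.
have G_bound y : `|G y| <= M + 1 by apply: (GM (M + 1)); [rewrite ltrDl | exists y].
apply/eqP; apply: contraT => c_neq0; have c_gt0 : 0 < `|c| by rewrite normr_gt0.
pose n := (Num.truncn (2 * (M + 1) / `|c|)).+1.
have : 2 * (M + 1) < n%:R * `|c| by rewrite -ltr_pdivrMr // truncnS_gt.
have : n%:R * `|c| <= 2 * (M + 1).
  rewrite -normr_nat -normrM (_ : n%:R * c = G point - G (iter n T point)).
    by apply: le_trans (ler_normB _ _) _; have := G_bound point;
      have := G_bound (iter n T point); lra.
  by rewrite G_iter; ring.
lra.
Qed.

Lemma real_coboundary_K0_eq (f g : X -> int) :
  K0_eq T f g -> real_coboundary T (fun x => (f x - g x)%:~R).
Proof.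
move=> [h [hc fgh]]; exists (fun x => (h x)%:~R); split => // x.
by rewrite fgh intrB.
Qed.

Hypothesis minimal : forall x, closure (Defs.orbit T x) = [set: X].

Lemma invariant_cst (p : X -> R) : continuous p -> (forall x, p (T x) = p x) ->
  forall x y, p y = p x.
Proof.
move=> pc pT x y.
have p_iter n z : p (iter n T z) = p z by elim: n z => // n IH z; rewrite iterS pT IH.
have cl : closed (p @^-1` [set p x]).
  by apply: preimage_closed => [z _|]; [exact: pc | exact: closed_eq].
have orbit_sub : Defs.orbit T x `<=` p @^-1` [set p x].
  by move=> z [n [->|->]] /=; rewrite p_iter.
by have := closureS orbit_sub; rewrite minimal -(closure_id _).1 //; apply.
Qed.

Lemma K0_eq_real_coboundary (f g : X -> int) :
  real_coboundary T (fun x => (f x - g x)%:~R) -> K0_eq T f g.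
Proof.
move=> [F [Fc hF]].
have F_T x : F (T x) = F x + (g x - f x)%:~R by have := hF x; rewrite !intrB; lra.
have F2pi_cont (trig : R -> R) :
    continuous trig -> continuous (fun x => trig (2 * pi * F x)).
  move=> trig_cont x; apply: (@continuous_comp _ _ _ (fun x => 2 * pi * F x)).
    by apply: cvgM; [exact: cvg_cst | exact: Fc].
  exact: trig_cont.
pose x0 : X := point.
have cosF : forall x, cos (2 * pi * F x) = cos (2 * pi * F x0).
  apply: (invariant_cst (F2pi_cont _ (@continuous_cos R)) _ x0) => x.
  by rewrite F_T cos2piD_intr.
have sinF : forall x, sin (2 * pi * F x) = sin (2 * pi * F x0).
  apply: (invariant_cst (F2pi_cont _ (@continuous_sin R)) _ x0) => x.
  by rewrite F_T sin2piD_intr.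
pose h x := Num.floor (F x - F x0).
have hE x : (h x)%:~R = F x - F x0.
  have [n Fx] := cos_sin_2pi_eq (cosF x) (sinF x).
  by rewrite /h (_ : F x - F x0 = n%:~R) ?intrKfloor // Fx addrAC subrr add0r.
exists h; split.
  rewrite /cont_int (funext hE) => x.
  by apply: cvgB; [exact: Fc | exact: cvg_cst].
by move=> x; apply: (@intr_inj R); rewrite hF intrB !hE; ring.
Qed.

End Coboundaries.

Section EigenvalueGroup.
Variables (R : realType) (X : pseudoPMetricType R) (T : X -> X).

Lemma E_set0 : E_set T 0.
Proof.
exists (fun=> 1), (fun=> 0); split; try exact: cst_continuous.
  by move=> x; rewrite expr1n expr0n addr0.
by move=> x; rewrite !mulr0 cos0 sin0; split; ring.
Qed.

Lemma E_setD t1 t2 : E_set T t1 -> E_set T t2 -> E_set T (t1 + t2).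
Proof.
move=> [fr1 [fi1 [fr1c fi1c f1 f1T]]] [fr2 [fi2 [fr2c fi2c f2 f2T]]].
exists (fun x => fr1 x * fr2 x - fi1 x * fi2 x),
       (fun x => fr1 x * fi2 x + fi1 x * fr2 x); split.
- move=> x; apply: cvgB; apply: cvgM;
  by [exact: fr1c | exact: fr2c | exact: fi1c | exact: fi2c].
- move=> x; apply: cvgD; apply: cvgM;
  by [exact: fr1c | exact: fr2c | exact: fi1c | exact: fi2c].
- move=> x; rewrite -[RHS]mulr1 -{1}(f1 x) -(f2 x); ring.
- move=> x /=; have [-> ->] := f1T x; have [-> ->] := f2T x.
  by rewrite (mulrDr (2 * pi)) cosD sinD; split; ring.
Qed.

Lemma E_setN t : E_set T t -> E_set T (- t).
Proof.
move=> [fr [fi [frc fic f1 fT]]]; exists fr, (fun x => - fi x); split => //.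
- by move=> x; apply: cvgN; exact: fic.
- by move=> x; rewrite sqrrN.
- by move=> x; have [-> ->] := fT x; rewrite mulrN cosN sinN; split; ring.
Qed.

End EigenvalueGroup.

Lemma clopen_preimage1 (R : realType) (Y : topologicalType) (v : Y -> R) :
  continuous v -> (forall y, v y = 0 \/ v y = 1) -> clopen (v @^-1` [set 1]).
Proof.
move=> vc v01; split.
  rewrite (_ : _ @^-1` _ = v @^-1` [set z | 1 / 2 < z]).
    by apply: (continuousP _).1 => //; exact: open_gt.
  by apply/seteqP; split => y /=; [move=> ->; lra | case: (v01 y) => ->; lra].
by apply: preimage_closed => [y _|]; [exact: vc | exact: closed_eq].
Qed.

Section Admissible.
Variables (R : realType) (X : pseudoPMetricType R) (T : X -> X).

Lemma admissible0 : admissible T 0 set0.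
Proof.
split; first exact: clopen0.
exists (fun=> 0); split; first exact: cst_continuous.
by move=> x; rewrite indicE in_set0 subrr.
Qed.

Lemma admissible_exists (theta : R) :
  hausdorff_space X -> zero_dimensional X -> compact [set: X] -> continuous T ->
  E_set T theta -> 0 < theta < 1 -> exists U, admissible T theta U.
Proof.
move=> hX zX cX Tc [fr [fi [frc fic f1 fT]]] /andP[th_gt0 th_lt1].
pose eps := theta * (1 - theta) / 2.
have eps_gt0 : 0 < eps by rewrite divr_gt0 // mulr_gt0 // subr_gt0.
have eps_th : eps * 2 <= theta by rewrite mulfVK //; nra.
have eps_1th : eps * 2 <= 1 - theta by rewrite mulfVK //; nra.
have [phi [phic phiP]] := turn_angle_lift frc fic f1 eps_gt0 hX zX cX.
pose v x := theta + phi x - phi (T x).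
have vc : continuous v.
  move=> x; apply: cvgB; first by apply: cvgD; [exact: cvg_cst | exact: phic].
  exact: continuous_comp (Tc x) (phic (T x)).
have v01 x : v x = 0 \/ v x = 1.
  have [c1 s1 /andP[lo1 hi1]] := phiP x.
  have [c2 s2 /andP[lo2 hi2]] := phiP (T x).
  have [n vn] : exists n : int, v x = n%:~R.
    have cosE : cos (2 * pi * (theta + phi x)) = cos (2 * pi * phi (T x)).
      by rewrite c2 (fT x).1 mulrDr cosD c1 s1.
    have sinE : sin (2 * pi * (theta + phi x)) = sin (2 * pi * phi (T x)).
      by rewrite s2 (fT x).2 mulrDr sinD c1 s1; ring.
    by have [n nE] := cos_sin_2pi_eq cosE sinE; exists n; rewrite /v nE; ring.
  have n_gt : (-1 < n)%R by rewrite -(ltr_int R) rmorphN1 -vn /v; lra.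
  have n_lt : (n < 2)%R by rewrite -(ltr_int R) -vn /v; lra.
  have : n = 0 \/ n = 1 by lia.
  by rewrite vn => -[->|->]; [left | right].
exists (v @^-1` [set 1]); split; first exact: clopen_preimage1.
exists phi; split => // x; rewrite indicE.
have [vx|vx] := v01 x.
  by rewrite memNset /=; move: vx; rewrite /v; lra.
by rewrite mem_set //=; move: vx; rewrite /v; lra.
Qed.

End Admissible.

Lemma Theta_repE (R : realType) (X : pseudoPMetricType R) (t : R) (U : set X) x :
  (Theta_rep t U x)%:~R = t + (\1_U x - fracpart t).
Proof. by rewrite /Theta_rep intrD !indicE mulrz_nat /fracpart; ring. Qed.

Theorem mainTheorem5 (R : realType) (X : pseudoPMetricType R) (T : X -> X) :
  cantor_minimal T ->
  (* existence of the sets U_theta, with U_0 = emptyset allowed *)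
  (forall theta : R, E_set T theta -> 0 <= theta < 1 ->
     exists U : set X, admissible T theta U) /\
  admissible T 0 set0 /\
  (* E(X,T) is a subgroup of R (domain of the homomorphism) *)
  (E_set T 0 /\
   forall t1 t2 : R, E_set T t1 -> E_set T t2 ->
     E_set T (t1 + t2) /\ E_set T (- t1)) /\
  (* Theta is well defined: independent of the choice of U_{fracpart theta} *)
  (forall (theta : R) (U U' : set X), E_set T theta ->
     admissible T (fracpart theta) U -> admissible T (fracpart theta) U' ->
     K0_eq T (Theta_rep theta U) (Theta_rep theta U')) /\
  (* Theta is a group homomorphism *)
  (forall (t1 t2 : R) (U1 U2 U12 : set X), E_set T t1 -> E_set T t2 ->
     admissible T (fracpart t1) U1 -> admissible T (fracpart t2) U2 ->
     admissible T (fracpart (t1 + t2)) U12 ->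
     K0_eq T (Theta_rep (t1 + t2) U12)
               (fun x => Theta_rep t1 U1 x + Theta_rep t2 U2 x)) /\
  (* Theta is injective *)
  (forall (t1 t2 : R) (U1 U2 : set X), E_set T t1 -> E_set T t2 ->
     admissible T (fracpart t1) U1 -> admissible T (fracpart t2) U2 ->
     K0_eq T (Theta_rep t1 U1) (Theta_rep t2 U2) -> t1 = t2).
Proof.
move=> [[_ cX hX zX] [_ [_ _ Tc _]] minimal].
split=> [th thE /andP[th_ge0 th_lt1]|].
  have [->|th_neq0] := eqVneq th 0; first by exists set0; exact: admissible0.
  by apply: admissible_exists => //; rewrite lt0r th_neq0 th_ge0 th_lt1.
split; first exact: admissible0.
split; first by split=> [|t1 t2 ? ?];
  [exact: E_set0 | split; [exact: E_setD | exact: E_setN]].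
split=> [th U U' _ [_ cobU] [_ cobU']|].
  apply: (K0_eq_real_coboundary minimal).
  apply: (eq_real_coboundary (real_coboundaryB cobU cobU')) => x.
  by rewrite intrB !Theta_repE; ring.
split=> [t1 t2 U1 U2 U12 _ _ [_ cob1] [_ cob2] [_ cob12]|].
  apply: (K0_eq_real_coboundary minimal).
  apply: (eq_real_coboundary (real_coboundaryB (real_coboundaryB cob12 cob1) cob2)) => x.
  by rewrite intrB intrD !Theta_repE; ring.
move=> t1 t2 U1 U2 _ _ [_ cob1] [_ cob2] /real_coboundary_K0_eq cob.
apply/eqP; rewrite -subr_eq0; apply/eqP; apply: real_coboundary_cst cX _.
apply: (eq_real_coboundary (real_coboundaryB cob (real_coboundaryB cob1 cob2))) => x.
by rewrite intrB !Theta_repE; ring.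
Qed.
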